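(* Let $K$ be a positive semiring and let $H=(V,E)$ be a hypergraph with the local-to-global consistency property for $K$-relations. Then for every $W\subseteq V$, the induced hypergraph $H[W]$ also has the local-to-global consistency property for $K$-relations.
   Context: Every attribute has a nonempty domain $\mathrm{Dom}(A)$. A commutative semiring $(K,+,\cdot,0,1)$ with $0\neq 1$ is positive if $a+b=0$ implies $a=b=0$, and $ab=0$ implies $a=0$ or $b=0$. For a finite set of attributes $X$, $\mathrm{Tup}(X)$ is the set of maps assigning to each $A\in X$ an element of $\mathrm{Dom}(A)$; $t[Y]$ is restriction; $XY=X\cup Y$. A $K$-relation over $X$ is a map $R:\mathrm{Tup}(X)\to K$ with finite support $R'=\{t:R(t)\neq0\}$; its marginal on $Y\subseteq X$ is $R[Y](u)=\sum_{r\in R',r[Y]=u}R(r)$. $R\equiv S$ means $aR=bS$ for nonzero $a,b\in K$. $R$ over $X$ and $S$ over $Y$ are consistent if some $K$-relation $T$ over $XY$ has $R\equiv T[X]$, $S\equiv T[Y]$. A collection $R_1,\dots,R_m$ ($R_i$ over $X_i$) is pairwise consistent if every two members are consistent, and globally consistent if some $K$-relation $T$ over $X_1\cup\cdots\cup X_m$ satisfies $R_i\equiv T[X_i]$ for all $i$. A hypergraph $H=(V,E)$ (finite set $V$ of attributes, hyperedges nonempty subsets of $V$) with hyperedges $X_1,\dots,X_m$ has the local-to-global consistency property for $K$-relations if every pairwise consistent collection of $K$-relations $R_1,\ldots,R_m$ with $R_i$ over $X_i$ is globally consistent. For $W\subseteq V$, $H[W]=(W,\{X\cap W:X\in E\}\setminus\{\emptyset\})$.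 *)

From HB Require Import structures.
From mathcomp Require Import all_boot all_order all_algebra.
From mathcomp Require Import boolp classical_sets functions cardinality fsbigop.
Set Implicit Arguments. Unset Strict Implicit. Unset Printing Implicit Defensive.
Import Order.TTheory GRing.Theory.
Local Open Scope classical_set_scope.
Local Open Scope ring_scope.

(* A commutative semiring with 0 <> 1 is a [comNzSemiRingType].
   Positivity: a + b = 0 -> a = b = 0, and a * b = 0 -> a = 0 \/ b = 0. *)
Definition positive_semiring (K : comNzSemiRingType) : Prop :=
  (forall a b : K, a + b = 0 -> a = 0 /\ b = 0) /\
  (forall a b : K, a * b = 0 -> a = 0 \/ b = 0).

Section KRelations.
Variables (Attr : Type) (Dom : Attr -> Type) (K : comNzSemiRingType).

(* Equality of tuples is extensional (classical); we equip the type with the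
   classical choice structure so that finitely supported sums make sense. *)
Definition Tup (X : set Attr) : Type := {classic (forall A : Attr, X A -> Dom A)}.

Definition restr (X Y : set Attr) (sYX : Y `<=` X) (t : Tup X) : Tup Y :=
  fun A (hA : Y A) => t A (sYX A hA).

Record krel (X : set Attr) := KRel {
  krel_fun :> Tup X -> K;
  krel_fin : finite_set [set t | krel_fun t != 0] }.

Definition marg (X Y : set Attr) (sYX : Y `<=` X) (R : Tup X -> K) : Tup Y -> K :=
  fun u => \sum_(r \in [set r : Tup X | restr sYX r = u]) R r.

Definition kequiv (X : set Attr) (R S : Tup X -> K) : Prop :=
  exists a b : K, [/\ a != 0, b != 0 & forall t, a * R t = b * S t].

Definition consistent (X Y : set Attr) (R : krel X) (S : krel Y) : Prop :=
  exists T : krel (X `|` Y),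
    kequiv R (marg (@subsetUl _ X Y) T) /\ kequiv S (marg (@subsetUr _ X Y) T).

(* local-to-global consistency property for the hyperedge set E
   (the family of K-relations is indexed by the hyperedges themselves;
   the values of R outside E are irrelevant) *)
Definition local_to_global (E : set (set Attr)) : Prop :=
  forall R : forall X : set Attr, krel X,
    (forall X Y, E X -> E Y -> consistent (R X) (R Y)) ->
    exists T : krel (\bigcup_(X in E) X),
      forall X (hX : E X), kequiv (R X) (marg (bigcup_sup hX) T).

End KRelations.

Definition hypergraph (Attr : Type) (V : set Attr) (E : set (set Attr)) : Prop :=
  [/\ finite_set V, finite_set E & forall X, E X -> X !=set0 /\ X `<=` V].

Definition induced_edges (Attr : Type) (E : set (set Attr)) (W : set Attr)
  : set (set Attr) :=
  [set Y | (exists2 X, E X & Y = X `&` W) /\ Y != set0].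

From HB Require Import structures.
From mathcomp Require Import all_boot all_order all_algebra.
From mathcomp Require Import boolp classical_sets functions cardinality fsbigop.
From mathcomp Require Import finmap.
Set Implicit Arguments. Unset Strict Implicit. Unset Printing Implicit Defensive.
Import Order.TTheory GRing.Theory.
Local Open Scope classical_set_scope.
Local Open Scope ring_scope.

(* Fix a default value [c A] in every domain.  A K-relation over a set [D]
   of attributes extends to any [U] containing [D] by giving weight 0 to the
   tuples that are not equal to the default outside [D] ([ext]).  The key
   computation ([marg_ext]) is that marginalising such an extension onto [X]
   is the extension of the marginal onto [X ∩ D].

   Given a pairwise consistent family [R] on the hyperedges [X ∩ W] of H[W],
   extend each [R (X ∩ W)] to [X] (using the unit relation on the empty set
   when [X ∩ W] is empty).  Extensions of witnesses of consistency witness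
   consistency of the extensions, so the lifted family is pairwise consistent
   on H; a global witness for it, marginalised onto the union of the edges of
   H[W], is a global witness for [R].  The unit relation is consistent with
   any nonzero relation, which is where positivity of K enters; the remaining
   case, where some (hence every) [R Z] vanishes, is witnessed by the zero
   relation. *)

Section KRelationCalculus.
Variables (Attr : Type) (Dom : Attr -> Type) (K : comNzSemiRingType).

Local Notation Tup := (@Tup Attr Dom).
Local Notation restr := (@restr Attr Dom).
Local Notation marg := (@marg Attr Dom K).
Local Notation kequiv := (@kequiv Attr Dom K).

Lemma tup_ext X (t1 t2 : Tup X) : (forall A hA, t1 A hA = t2 A hA) -> t1 = t2.
Proof.
move=> h; apply: functional_extensionality_dep => A.
by apply: functional_extensionality_dep => hA; apply: h.
Qed.

Lemma tup_irr X (t : Tup X) A (h1 h2 : X A) : t A h1 = t A h2.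
Proof. by rewrite (Prop_irrelevance h1 h2). Qed.

Lemma restr_id X (s : X `<=` X) (t : Tup X) : restr s t = t.
Proof. by apply: tup_ext => A hA; rewrite /restr; apply: tup_irr. Qed.

Lemma restr_comp X Y Z (sYX : Y `<=` X) (sZY : Z `<=` Y) (sZX : Z `<=` X)
    (t : Tup X) :
  restr sZY (restr sYX t) = restr sZX t.
Proof. by apply: tup_ext => A hA; rewrite /restr; apply: tup_irr. Qed.

Definition finsupp X (f : Tup X -> K) := finite_set [set t | f t != 0].

Definition supp X (f : Tup X -> K) : seq (Tup X) :=
  fset_set [set t | f t != 0].

Lemma mem_supp X (f : Tup X -> K) t : finsupp f -> (t \in supp f) = (f t != 0).
Proof.
move=> hf; rewrite /supp in_fset_set //.
by apply/idP/idP => [/set_mem | h]; last exact/mem_set.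
Qed.

Lemma supp_uniq X (f : Tup X -> K) : uniq (supp f).
Proof. exact: fset_uniq. Qed.

Lemma supp_cov X (f : Tup X -> K) : finsupp f -> forall t, f t != 0 -> t \in supp f.
Proof. by move=> hf t; rewrite mem_supp. Qed.

Lemma fsum_seq X (f : Tup X -> K) (A : set (Tup X)) s : uniq s ->
    (forall t, f t != 0 -> t \in s) ->
  \sum_(t \in A) f t = \sum_(t <- s | t \in A) f t.
Proof.
move=> us cov.
rewrite (fsbigE [seq t <- s | t \in A]) ?filter_uniq //.
- by rewrite big_filter_cond; apply: eq_bigl => t; rewrite andbb.
- by move=> t /=; rewrite mem_filter => /andP[/set_mem].
- move=> t At; rewrite mem_filter (mem_set At) /= => tn.
  by apply/eqP; apply: contraNT tn; apply: cov.
Qed.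

Lemma margE X Y (s : Y `<=` X) (f : Tup X -> K) (r : seq (Tup X)) u : uniq r ->
    (forall t, f t != 0 -> t \in r) ->
  marg s f u = \sum_(t <- r | restr s t == u) f t.
Proof.
move=> ur cov; rewrite /marg (fsum_seq _ ur cov).
by apply: eq_bigl => t; apply/idP/eqP => [/set_mem //|h]; apply/mem_set.
Qed.

Lemma sum_fibres (I J : eqType) (s : seq I) (U : seq J) (g : I -> J) (P : pred J)
    (F : I -> K) : uniq U -> (forall t, t \in s -> g t \in U) ->
  \sum_(y <- U | P y) \sum_(t <- s | g t == y) F t = \sum_(t <- s | P (g t)) F t.
Proof.
move=> uU sU.
under eq_bigr do rewrite big_mkcond.
rewrite (exchange_big_dep xpredT) //= [RHS]big_mkcond /=.
apply: eq_big_seq => t ts.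
rewrite big_mkcond (bigD1_seq (g t)) ?sU //= eqxx.
by rewrite big1 ?addr0 ?andbT // => y /negbTE ny; rewrite eq_sym ny; case: (P y).
Qed.

Lemma marg_supp X Y (s : Y `<=` X) (f : Tup X -> K) y : finsupp f ->
  marg s f y != 0 -> y \in map (restr s) (supp f).
Proof.
move=> hf; rewrite (margE s y (supp_uniq f) (supp_cov hf)).
apply: contraNT => hy; rewrite big1_seq // => t /andP[/eqP ey ts].
by move: hy; rewrite -ey map_f.
Qed.

Lemma finsupp_marg X Y (s : Y `<=` X) (f : Tup X -> K) :
  finsupp f -> finsupp (marg s f).
Proof.
move=> hf; apply: (@sub_finite_set _ _ (restr s @` [set t | f t != 0])).
  move=> y /= /(marg_supp hf) /mapP [t ts ->].
  by exists t; rewrite //= -mem_supp.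
exact: finite_image.
Qed.

Lemma marg_comp X Y Z (sYX : Y `<=` X) (sZY : Z `<=` Y) (sZX : Z `<=` X)
    (f : Tup X -> K) :
  finsupp f -> marg sZY (marg sYX f) = marg sZX f.
Proof.
move=> hf; apply: functional_extensionality_dep => z.
pose U := undup (map (restr sYX) (supp f)).
have covU y : marg sYX f y != 0 -> y \in U.
  by move=> /(marg_supp hf); rewrite mem_undup.
rewrite (margE sZY z (undup_uniq _) covU).
under eq_bigr do rewrite (margE sYX _ (supp_uniq f) (supp_cov hf)).
rewrite sum_fibres ?undup_uniq //; last by move=> t ts; rewrite mem_undup map_f.
rewrite (margE sZX z (supp_uniq f) (supp_cov hf)).
by apply: eq_bigl => t; rewrite restr_comp.
Qed.

Lemma marg_id Z (s : Z `<=` Z) (R : Tup Z -> K) : marg s R = R.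
Proof.
apply: functional_extensionality_dep => u; rewrite /marg.
have -> : [set r : Tup Z | restr s r = u] = [set u].
  by apply/seteqP; split => r /=; rewrite restr_id.
by rewrite fsbig_set1.
Qed.

Lemma kequiv_refl X (f : Tup X -> K) : kequiv f f.
Proof. by exists 1, 1; split => //; apply: oner_neq0. Qed.

Section Positive.
Hypothesis Kpos : positive_semiring K.

Lemma mulf_eq0P (a b : K) : a != 0 -> a * b = 0 -> b = 0.
Proof. by move=> a0 /Kpos.2 [/eqP|//]; rewrite (negbTE a0). Qed.

Lemma sum_eq0P (I : eqType) (r : seq I) (P : pred I) (F : I -> K) :
  \sum_(t <- r | P t) F t = 0 -> forall t, t \in r -> P t -> F t = 0.
Proof.
elim: r => [|a r IH] //=; rewrite big_cons.
case: ifP => Pa.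
  move=> /Kpos.1 [Fa0 /IH h] t; rewrite inE => /orP[/eqP->|] //; exact: h.
move=> /IH h t; rewrite inE => /orP[/eqP->|]; [by rewrite Pa | exact: h].
Qed.

Lemma sum_neq0 X (f : Tup X -> K) (A : set (Tup X)) t0 : finsupp f -> A t0 ->
  f t0 != 0 -> \sum_(t \in A) f t != 0.
Proof.
move=> hf At0 ft0; rewrite (fsum_seq _ (supp_uniq f) (supp_cov hf)).
apply/eqP => /sum_eq0P h.
have : f t0 = 0 by apply: h; [rewrite mem_supp | exact: mem_set].
by move/eqP: ft0.
Qed.

Lemma kequiv_marg X Y (s : Y `<=` X) (f g : Tup X -> K) : finsupp f ->
  kequiv f g -> kequiv (marg s f) (marg s g).
Proof.
move=> hf [a [b [a0 b0 e]]]; exists a, b; split => // u.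
have cov_g t : g t != 0 -> t \in supp f.
  move=> gt; rewrite mem_supp //; apply/eqP => ft.
  by move: (e t); rewrite ft mulr0 => /esym/(mulf_eq0P b0)/eqP; rewrite (negbTE gt).
rewrite (margE s u (supp_uniq f) (supp_cov hf)) (margE s u (supp_uniq f) cov_g).
by rewrite !big_distrr /=; apply: eq_bigr => t _; rewrite e.
Qed.

Lemma consistent_zero X Y (R : krel Dom K X) (S : krel Dom K Y) :
  consistent R S -> (forall t, R t = 0) -> forall t, S t = 0.
Proof.
move=> [T [[a [b [a0 b0 eR]]] [a' [b' [a'0 b'0 eS]]]]] R0.
have margT0 u : marg (@subsetUl _ X Y) T u = 0.
  by apply: (mulf_eq0P b0); rewrite -eR R0 mulr0.
have T0 t : T t = 0.
  apply/eqP; apply: contraT => Tt.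
  have := @sum_neq0 _ T [set r | restr (@subsetUl _ X Y) r =
                                  restr (@subsetUl _ X Y) t] t (krel_fin T) erefl Tt.
  by rewrite -/(marg _ _ _) margT0 eqxx.
by move=> t; apply: (mulf_eq0P a'0); rewrite eS /marg fsbig1 ?mulr0.
Qed.

End Positive.

Section Extension.
Variable c : forall A, Dom A.

Definition agree D X (t : Tup X) : Prop := forall A (hA : X A), ~ D A -> t A hA = c A.

Definition merge D U (d : Tup D) : Tup U :=
  fun A (hA : U A) => match pselect (D A) with left h => d A h | right _ => c A end.
Arguments merge {D} U d.

Definition ext D U (sDU : D `<=` U) (R : Tup D -> K) : Tup U -> K :=
  fun t => if `[< agree D t >] then R (restr sDU t) else 0.

Lemma restr_merge D U (sDU : D `<=` U) (d : Tup D) : restr sDU (merge U d) = d.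
Proof.
apply: tup_ext => A hA; rewrite /restr /merge; case: pselect => [h|//].
exact: tup_irr.
Qed.

Lemma agree_merge D U (d : Tup D) : agree D (merge U d).
Proof. by move=> A hA nD; rewrite /merge; case: pselect. Qed.

Lemma merge_restr D U (sDU : D `<=` U) (t : Tup U) : agree D t ->
  merge U (restr sDU t) = t.
Proof.
move=> ag; apply: tup_ext => A hA; rewrite /merge; case: pselect => [h|n].
  by rewrite /restr; apply: tup_irr.
by rewrite ag.
Qed.

Lemma ext_merge D U (sDU : D `<=` U) (T : Tup D -> K) d :
  ext sDU T (merge U d) = T d.
Proof. by rewrite /ext asboolT ?restr_merge //; apply: agree_merge. Qed.

Lemma finsupp_ext D U (sDU : D `<=` U) (R : Tup D -> K) :
  finsupp R -> finsupp (ext sDU R).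
Proof.
move=> hR; apply: (@sub_finite_set _ _ (merge U @` [set d | R d != 0])).
  move=> t /=; rewrite /ext; case: asboolP => [ag|]; last by rewrite eqxx.
  by move=> h; exists (restr sDU t); rewrite ?merge_restr.
exact: finite_image.
Qed.

Lemma kequiv_ext D U (sDU : D `<=` U) (R S : Tup D -> K) :
  kequiv R S -> kequiv (ext sDU R) (ext sDU S).
Proof.
move=> [a [b [a0 b0 e]]]; exists a, b; split => // t; rewrite /ext.
by case: asboolP => _; rewrite ?mulr0.
Qed.

Lemma ext_id Z (s : Z `<=` Z) (R : Tup Z -> K) : ext s R = R.
Proof.
apply: functional_extensionality_dep => t.
by rewrite /ext asboolT ?restr_id.
Qed.

Lemma marg_ext U D X Z (sDU : D `<=` U) (sXU : X `<=` U) (sZX : Z `<=` X)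
    (sZD : Z `<=` D) (hZ : X `&` D `<=` Z) (T : Tup D -> K) : finsupp T ->
  marg sXU (ext sDU T) = ext sZX (marg sZD T).
Proof.
move=> hT; apply: functional_extensionality_dep => x.
have cov t : ext sDU T t != 0 -> t \in map (merge U) (supp T).
  rewrite /ext; case: asboolP => [ag|]; last by rewrite eqxx.
  by move=> h; rewrite -(merge_restr sDU ag) map_f // mem_supp.
have uniq_merge : uniq (map (merge U) (supp T)).
  rewrite map_inj_uniq ?supp_uniq // => d1 d2 e.
  by have := congr1 (restr sDU) e; rewrite !restr_merge.
rewrite (margE sXU x uniq_merge cov) big_map.
under eq_bigr do rewrite ext_merge.
rewrite /ext; case: asboolP => [ag|nag].
  rewrite (margE sZD _ (supp_uniq T) (supp_cov hT)); apply: eq_bigl => d.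
  apply/eqP/eqP => e.
    apply: tup_ext => A hA; rewrite /restr -e /restr /merge.
    case: pselect => [h|n]; first exact: tup_irr.
    by exfalso; apply: n; apply: sZD.
  apply: tup_ext => A hA; rewrite /restr /merge; case: pselect => [h|n].
    have hz : Z A := hZ _ (conj hA h).
    transitivity (@restr _ _ sZD d A hz); first exact: tup_irr.
    by rewrite e /restr; exact: tup_irr.
  by rewrite ag // => zA; exact: n (sZD _ zA).
rewrite big1_seq // => d /andP[/eqP e _]; exfalso; apply: nag => A hA nZ.
rewrite -e /restr /merge; case: pselect => [h|//].
by exfalso; apply: nZ; apply: hZ.
Qed.

Lemma marg_of_ext D U (sDU : D `<=` U) (R : Tup D -> K) : finsupp R ->
  marg sDU (ext sDU R) = R.
Proof.
move=> hR; have sDD : D `<=` D by [].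
have hD : D `&` D `<=` D by move=> A [].
by rewrite (marg_ext sDU sDU sDD sDD hD hR) ext_id marg_id.
Qed.

(* The default tuple, and its indicator: over the empty set of attributes
   this is the unit relation (the constant 1). *)
Definition dflt_tup Z : Tup Z := fun A (_ : Z A) => c A.
Arguments dflt_tup Z : clear implicits.

Definition dflt_ind Z (t : Tup Z) : K := if t == dflt_tup Z then 1 else 0.

Lemma finsupp_dflt_ind Z : finsupp (@dflt_ind Z).
Proof.
apply: (@sub_finite_set _ _ [set dflt_tup Z]); last exact: finite_set1.
by move=> t /=; rewrite /dflt_ind; case: (t =P dflt_tup Z) => [->|]; rewrite ?eqxx.
Qed.

Definition dflt_krel Z : krel Dom K Z := KRel (finsupp_dflt_ind Z).

Lemma dflt_krel_neq0 Z : dflt_krel Z (dflt_tup Z) != 0.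
Proof. by rewrite /= /dflt_ind eqxx oner_neq0. Qed.

Lemma tup_empty Z : Z = set0 -> forall t : Tup Z, t = dflt_tup Z.
Proof. by move=> eZ t; apply: tup_ext => A hA; exfalso; rewrite eZ in hA. Qed.

Hypothesis Kpos : positive_semiring K.

Lemma unit_marg_ext U Z1 Z2 (s2 : Z2 `<=` U) (s1 : Z1 `<=` U) (e1 : Z1 = set0)
    (S : Tup Z2 -> K) t0 : finsupp S -> S t0 != 0 ->
  kequiv S (marg s2 (ext s2 S)) /\ kequiv (@dflt_ind Z1) (marg s1 (ext s2 S)).
Proof.
move=> hS St0; split; first by rewrite marg_of_ext //; exact: kequiv_refl.
exists (marg s1 (ext s2 S) (dflt_tup Z1)), 1; split; last 2 first.
- exact: oner_neq0.
- by move=> t; rewrite (tup_empty e1 t) /dflt_ind eqxx mulr1 mul1r.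
apply: (@sum_neq0 Kpos _ _ _ (merge U t0)); first exact: finsupp_ext.
  by rewrite /= (tup_empty e1 (restr _ _)).
by rewrite ext_merge.
Qed.

Lemma consistent_unitl Z1 Z2 (e1 : Z1 = set0) (S : krel Dom K Z2) t0 :
  S t0 != 0 -> consistent (dflt_krel Z1) S.
Proof.
move=> St0; have [eS eU] := unit_marg_ext (@subsetUr _ Z1 Z2) (@subsetUl _ Z1 Z2)
  e1 (krel_fin S) St0.
by exists (KRel (finsupp_ext (@subsetUr _ Z1 Z2) (krel_fin S))).
Qed.

Lemma consistent_unitr Z1 Z2 (e2 : Z2 = set0) (S : krel Dom K Z1) t0 :
  S t0 != 0 -> consistent S (dflt_krel Z2).
Proof.
move=> St0; have [eS eU] := unit_marg_ext (@subsetUl _ Z1 Z2) (@subsetUr _ Z1 Z2)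
  e2 (krel_fin S) St0.
by exists (KRel (finsupp_ext (@subsetUl _ Z1 Z2) (krel_fin S))).
Qed.

End Extension.
End KRelationCalculus.

Lemma local_to_global_zero (K : comNzSemiRingType) (Attr : Type)
    (Dom : Attr -> Type) (E : set (set Attr)) (R : forall X, krel Dom K X) :
  positive_semiring K ->
  (forall X Y, E X -> E Y -> consistent (R X) (R Y)) ->
  (exists2 Z, E Z & forall t, R Z t = 0) ->
  exists T : krel Dom K (\bigcup_(X in E) X),
    forall X (hX : E X), kequiv (R X) (marg (bigcup_sup hX) T).
Proof.
move=> Kpos HR [Z EZ RZ0].
have fin0 : finite_set [set t : Tup Dom (\bigcup_(X in E) X) | (0 : K) != 0].
  by apply: sub_finite_set (finite_set0 _) => t /=; rewrite eqxx.
exists (KRel fin0) => X hX; exists 1, 1; split; try exact: oner_neq0.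
by move=> t; rewrite (consistent_zero Kpos (HR Z X EZ hX) RZ0) /marg fsbig1.
Qed.

Section InducedLifting.
Variables (K : comNzSemiRingType) (Attr : Type) (Dom : Attr -> Type).
Hypothesis Kpos : positive_semiring K.
Variable c : forall A, Dom A.
Variables (E : set (set Attr)) (W : set Attr) (R : forall X, krel Dom K X).
Hypothesis HR : forall X Y, induced_edges E W X -> induced_edges E W Y ->
  consistent (R X) (R Y).
Hypothesis R_neq0 : forall Z, induced_edges E W Z -> exists t, R Z t != 0.

Lemma induced_edge X : E X -> X `&` W != set0 -> induced_edges E W (X `&` W).
Proof. by move=> hX hn; split; first exists X. Qed.

Definition padded Z : krel Dom K Z :=
  if pselect (Z = set0) then @dflt_krel _ _ K c Z else R Z.

Lemma padded_set0 Z : Z = set0 -> padded Z = @dflt_krel _ _ K c Z.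
Proof. by rewrite /padded; case: pselect. Qed.

Lemma padded_R Z : Z != set0 -> padded Z = R Z.
Proof. by move=> /eqP nZ; rewrite /padded; case: pselect. Qed.

Lemma padded_neq0 X : E X -> exists t, padded (X `&` W) t != 0.
Proof.
move=> hX; have [eX|/eqP nX] := pselect (X `&` W = set0).
  by rewrite padded_set0 //; eexists; exact: dflt_krel_neq0.
by rewrite padded_R //; apply: R_neq0; exact: induced_edge.
Qed.

Lemma padded_consistent X Y : E X -> E Y ->
  consistent (padded (X `&` W)) (padded (Y `&` W)).
Proof.
move=> hX hY.
have [eX|/eqP nX] := pselect (X `&` W = set0).
  have [t0 t0n] := padded_neq0 hY.
  by rewrite padded_set0 //; exact: consistent_unitl t0n.
have [eY|/eqP nY] := pselect (Y `&` W = set0).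
  have [t0 t0n] := padded_neq0 hX.
  by rewrite (padded_set0 eY); exact: consistent_unitr t0n.
by rewrite !padded_R //; apply: HR; exact: induced_edge.
Qed.

Definition lifted X : krel Dom K X :=
  KRel (finsupp_ext c (@subIsetl _ X W) (krel_fin (padded (X `&` W)))).

(* Extending a witness of consistency of the traces witnesses consistency of
   the lifts. *)
Lemma lifted_consistent X Y : E X -> E Y -> consistent (lifted X) (lifted Y).
Proof.
move=> hX hY; have [T [eX eY]] := padded_consistent hX hY.
have sWU : (X `&` W) `|` (Y `&` W) `<=` X `|` Y.
  by move=> A [[h _]|[h _]]; [left|right].
exists (KRel (finsupp_ext c sWU (krel_fin T))); split => /=.
  have hZ : X `&` ((X `&` W) `|` (Y `&` W)) `<=` X `&` W.
    by move=> A [hx [[_ hw]|[_ hw]]].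
  rewrite (marg_ext c sWU (@subsetUl _ X Y) (@subIsetl _ X W)
    (@subsetUl _ _ (Y `&` W)) hZ (krel_fin T)).
  exact: kequiv_ext.
have hZ : Y `&` ((X `&` W) `|` (Y `&` W)) `<=` Y `&` W.
  by move=> A [hy [[_ hw]|[_ hw]]].
rewrite (marg_ext c sWU (@subsetUr _ X Y) (@subIsetl _ Y W)
  (@subsetUr _ (X `&` W) _) hZ (krel_fin T)).
exact: kequiv_ext.
Qed.

(* A global witness for the lifted family, marginalised onto the union of the
   edges of H[W], is a global witness for [R]. *)
Lemma induced_global :
  local_to_global Dom K E ->
  exists T : krel Dom K (\bigcup_(Z in induced_edges E W) Z),
    forall Z (hZ : induced_edges E W Z), kequiv (R Z) (marg (bigcup_sup hZ) T).
Proof.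
move=> L2G; have [T HT] := L2G lifted lifted_consistent.
have sU : \bigcup_(Z in induced_edges E W) Z `<=` \bigcup_(X in E) X.
  by move=> A [_ [[X hX ->] _] [hA _]]; exists X.
exists (KRel (finsupp_marg sU (krel_fin T))) => Z hZ /=.
move: (bigcup_sup hZ) => sZ.
have [[X hX eZ] nZ] := hZ; subst Z.
have sZU : X `&` W `<=` \bigcup_(X in E) X by move=> A h; exact: sU A (sZ A h).
rewrite (marg_comp sU sZ sZU (krel_fin T)).
rewrite -(marg_comp (bigcup_sup hX) (@subIsetl _ X W) sZU (krel_fin T)).
have := kequiv_marg Kpos (@subIsetl _ X W) (krel_fin (lifted X)) (HT X hX).
by rewrite /= marg_of_ext ?padded_R //; exact: krel_fin.
Qed.

End InducedLifting.

(* Pick defaults in the (inhabited) domains; either some relation of the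
   family vanishes, or all are nonzero and the lifting argument applies. *)
Unset Implicit Arguments.
Theorem lemma15 (K : comNzSemiRingType) (Attr : Type) (Dom : Attr -> Type)
    (HDom : forall A : Attr, inhabited (Dom A))
    (V : set Attr) (E : set (set Attr)) :
  positive_semiring K ->
  hypergraph V E ->
  local_to_global Dom K E ->
  forall W : set Attr, W `<=` V ->
    local_to_global Dom K (induced_edges E W).
Proof.
move=> Kpos _ L2G W _ R HR.
have c : forall A, Dom A.
  move=> A; have /cid [x _] : exists x : Dom A, True.
    by case: (HDom A) => x; exists x.
  exact: x.
have [zero | nonzero] :=
  pselect (exists2 Z, induced_edges E W Z & forall t, R Z t = 0).
  exact: local_to_global_zero Kpos HR zero.
apply: (induced_global Kpos c HR) => // Z hZ.
have [//|none] := pselect (exists t, R Z t != 0).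
exfalso; apply: nonzero; exists Z => // t.
by apply/eqP/negPn/negP => Rt; apply: none; exists t.
Qed.
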